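(* Let $X$ be a locally compact Polish space and $B\subseteq X$ dense. Let $\succeq'$ be a complete binary relation on $X$, and let $\succeq$ and $\succeq^*$ be complete, continuous, locally strict binary relations on $X$. If $\succeq'\cap(B\times B)\subseteq\succeq^*\cap\succeq\cap(B\times B)$, then $\succeq^*=\succeq$.
   Context: A binary relation $R\subseteq X\times X$ is complete if for all $x,y$, $xRy$ or $yRx$; continuous if closed in $X\times X$; locally strict if for all $x R y$ and every neighborhood $V$ of $(x,y)$ there is $(x',y')\in V$ with $x'Ry'$ and not $y'Rx'$. *)

From HB Require Import structures.
From mathcomp Require Import all_boot all_order all_algebra.
From mathcomp Require Import all_classical all_reals all_analysis.
From mathcomp Require Import Rstruct Rstruct_topology.
From Stdlib Require Import Reals.
Set Implicit Arguments. Unset Strict Implicit. Unset Printing Implicit Defensive.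
Local Open Scope classical_set_scope.

Definition rel_complete (X : Type) (Rel : set (X * X)) : Prop :=
  forall x y : X, Rel (x, y) \/ Rel (y, x).

Definition rel_continuous (X : topologicalType) (Rel : set (X * X)) : Prop :=
  closed Rel.

Definition rel_locally_strict (X : topologicalType) (Rel : set (X * X)) : Prop :=
  forall x y : X, Rel (x, y) ->
  forall V : set (X * X), nbhs (x, y) V ->
  exists x' y', V (x', y') /\ Rel (x', y') /\ ~ Rel (y', x').

Definition separable_space (X : topologicalType) : Prop :=
  exists D : set X, countable D /\ dense D.

Definition completely_metrizable (X : topologicalType) : Prop :=
  exists d : X -> X -> Rdefinitions.R,
    (forall x y, Rle 0 (d x y)) /\
    (forall x y, d x y = 0%R <-> x = y) /\
    (forall x y, d x y = d y x) /\
    (forall x y z, Rle (d x z) (Rplus (d x y) (d y z))) /\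
    (forall (x : X) (A : set X),
        nbhs x A <-> exists e, Rlt 0 e /\ [set y | Rlt (d x y) e] `<=` A) /\
    (forall u : nat -> X,
        (forall e, Rlt 0 e -> exists N : nat, forall m n : nat,
            (N <= m)%N -> (N <= n)%N -> Rlt (d (u m) (u n)) e) ->
        exists l : X, forall e, Rlt 0 e -> exists N : nat, forall n : nat,
            (N <= n)%N -> Rlt (d (u n) l) e).

Definition polish_space (X : topologicalType) : Prop :=
  separable_space X /\ completely_metrizable X.

From HB Require Import structures.
From mathcomp Require Import all_boot all_order all_algebra.
From mathcomp Require Import all_classical all_reals all_analysis.
Local Open Scope classical_set_scope.
Set Implicit Arguments. Unset Strict Implicit.

(* If x Rst y but not x Rs y, local strictness of Rst moves (x, y) inside the
   open set ~Rs to a pair with x' Rst y' and not y' Rst x'.  Near (x', y') all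
   pairs lie outside Rs, near (y', x') outside Rst; density gives a near x' and
   b near y' in B, and whichever way the complete relation Rp compares them,
   that pair lies in Rs or in Rst, a contradiction.  By symmetry Rst = Rs. *)

Lemma dense_nbhs (X : topologicalType) (B N : set X) (x : X) :
  dense B -> nbhs x N -> N `&` B !=set0.
Proof.
move=> dB; rewrite nbhsE; case=> O [oO Ox] ON.
have [b [Ob Bb]] := dB O (ex_intro _ x Ox) oO.
by exists b; split => //; apply: ON.
Qed.

Lemma nbhs_closedC (X : topologicalType) (C : set X) (p : X) :
  closed C -> ~ C p -> nbhs p (~` C).
Proof. by move=> cC Cp; apply: open_nbhs_nbhs; split => //; exact: closed_openC. Qed.

Lemma dense_complete_closed_total (X : topologicalType) (B : set X)
    (Rp R1 R2 : set (X * X)) :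
  dense B -> rel_complete Rp -> closed R1 -> closed R2 ->
  Rp `&` (B `*` B) `<=` R1 `&` R2 ->
  forall x y, R1 (x, y) \/ R2 (y, x).
Proof.
move=> dB cRp cR1 cR2 sub x y; apply: contrapT => /not_orP[nR1 nR2].
have [[P Q] [/= Px Qy] PQ] := nbhs_closedC cR1 nR1.
have [[P' Q'] [/= P'y Q'x] PQ'] := nbhs_closedC cR2 nR2.
have [a [[Pa Q'a] Ba]] := dense_nbhs dB (filterI Px Q'x).
have [b [[Qb P'b] Bb]] := dense_nbhs dB (filterI Qy P'y).
case: (cRp a b) => [Rab | Rba].
- have [R1ab _] := sub (a, b) (conj Rab (conj Ba Bb)).
  exact: PQ (a, b) (conj Pa Qb) R1ab.
- have [_ R2ba] := sub (b, a) (conj Rba (conj Bb Ba)).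
  exact: PQ' (b, a) (conj P'b Q'a) R2ba.
Qed.

Lemma locally_strict_sub_closed (X : topologicalType) (R1 R2 : set (X * X)) :
  closed R1 -> rel_locally_strict R2 ->
  (forall x y, R1 (x, y) \/ R2 (y, x)) -> R2 `<=` R1.
Proof.
move=> cR1 lsR2 total [x y] R2xy; apply: contrapT => nR1xy.
have [x' [y' [nR1 [_ nR2]]]] := lsR2 x y R2xy _ (nbhs_closedC cR1 nR1xy).
by case: (total x' y').
Qed.

Theorem lemma11 (X : topologicalType) (B : set X)
  (Rp Rs Rst : set (X * X)) :
  polish_space X -> locally_compact [set: X] -> dense B ->
  rel_complete Rp ->
  rel_complete Rs -> rel_continuous Rs -> rel_locally_strict Rs ->
  rel_complete Rst -> rel_continuous Rst -> rel_locally_strict Rst ->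
  Rp `&` (B `*` B) `<=` Rst `&` Rs `&` (B `*` B) ->
  Rst = Rs.
Proof.
move=> _ _ dB cRp _ cRs lsRs _ cRst lsRst sub.
have subRsRst : Rp `&` (B `*` B) `<=` Rs `&` Rst.
  by move=> p /sub [[Rstp Rsp] _].
have subRstRs : Rp `&` (B `*` B) `<=` Rst `&` Rs.
  by move=> p /sub [].
apply/seteqP; split; apply: locally_strict_sub_closed => //.
- exact: dense_complete_closed_total dB cRp cRs cRst subRsRst.
- exact: dense_complete_closed_total dB cRp cRst cRs subRstRs.
Qed.
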